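(* The binary trees $\{T_n\}_{n=1}^\infty$ do not admit uniformly bilipschitz embeddings into the diamonds $\{D_n\}_{n=1}^\infty$. That is, there do not exist $K<\infty$, numbers $m(n)\in\mathbb{N}$ and maps $f_n:V(T_n)\to V(D_{m(n)})$ ($n\in\mathbb{N}$) such that each $f_n$ is a bilipschitz embedding with distortion at most $K$.
   Context: $T_n$ (binary tree of depth $n$): vertices are all finite $0$-$1$ sequences of length at most $n$ (including the empty sequence); two vertices are adjacent if one sequence is obtained from the other by adding one term on the right. Diamonds: $D_0$ has two vertices joined by an edge; $D_i$ is obtained from $D_{i-1}$ by replacing each edge $uv$ by a quadrilateral $u,a,v,b$ (with new vertices $a,b$). Both are regarded as metric spaces on their vertex sets with the shortest path metric, each edge having length $1$. The distortion of a bilipschitz map $f$ is $\mathrm{Lip}(f)\cdot\mathrm{Lip}(f^{-1})$. *)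

From Stdlib Require Import Reals List Arith.
Import ListNotations.
Open Scope R_scope.

Inductive walk {V : Type} (adj : V -> V -> Prop) : V -> V -> nat -> Prop :=
| walk_nil : forall x, walk adj x x 0
| walk_cons : forall x y z k, adj x y -> walk adj y z k -> walk adj x z (S k).

Definition graph_dist {V : Type} (adj : V -> V -> Prop) (x y : V) (d : nat) : Prop :=
  walk adj x y d /\ (forall k, walk adj x y k -> (d <= k)%nat).

Record graph := { vtype : Type; vert : vtype -> Prop; adj : vtype -> vtype -> Prop }.

Definition tree_adj (n : nat) (u v : list bool) : Prop :=
  (length u <= n)%nat /\ (length v <= n)%nat /\
  exists b : bool, v = u ++ [b] \/ u = v ++ [b].

Definition tree (n : nat) : graph :=
  {| vtype := list bool; vert := fun u => (length u <= n)%nat; adj := tree_adj n |}.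

(* D_0 = {0,1} with edge 01.
   D_i: the k-th edge (u,v) of D_{i-1} is replaced by the quadrilateral
   u,a,v,b with new vertices a = N + 2k, b = N + 2k + 1 (N = #vertices of D_{i-1}). *)
Fixpoint quad_edges (N k : nat) (es : list (nat * nat)) : list (nat * nat) :=
  match es with
  | [] => []
  | (u, v) :: es' =>
      let a := (N + 2 * k)%nat in let b := (N + 2 * k + 1)%nat in
      (u, a) :: (a, v) :: (v, b) :: (b, u) :: quad_edges N (S k) es'
  end.

Fixpoint diamond_data (i : nat) : nat * list (nat * nat) :=
  match i with
  | O => (2%nat, [(0%nat, 1%nat)])
  | S i' => let (N, es) := diamond_data i' in
            ((N + 2 * length es)%nat, quad_edges N 0 es)
  end.

Definition diamond (i : nat) : graph :=
  {| vtype := nat;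
     vert := fun x => (x < fst (diamond_data i))%nat;
     adj := fun x y => In (x, y) (snd (diamond_data i)) \/ In (y, x) (snd (diamond_data i)) |}.

Definition bilip_dist_le (G H : graph) (f : vtype G -> vtype H) (K : R) : Prop :=
  (forall x, vert G x -> vert H (f x)) /\
  exists L1 L2 : R, 0 < L1 /\ 0 < L2 /\ L1 * L2 <= K /\
    forall x y (d1 d2 : nat), vert G x -> vert G y ->
      graph_dist (adj G) x y d1 -> graph_dist (adj H) (f x) (f y) d2 ->
      INR d2 <= L1 * INR d1 /\ INR d1 <= L2 * INR d2.

(* Write D_(j+M) as D_j with every edge replaced by a copy of D_M.  The
   vertices of D_j are gates, every other vertex lies in the cell of one edge
   of D_j, a walk can only leave a cell through one of its two gates, every
   vertex of a cell is within 2^M of its gates, and distinct gates are at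
   distance at least 2^M.

   Suppose f : T_n -> D_m has Lipschitz constants L1 (for f) and L2 (for the
   inverse), L1 L2 <= K, n >= 3Q with Q > 4K(4K+3).  Choose 2^M between
   L1(4K+3) and twice that.  The spine 0^s of T_n is long, so m = j + M for
   some j.  From a spine vertex 0^s (Q <= s <= 2Q) issue three arms of
   length Q (down through 0, down through 1, up).  No arm stays in the cell
   of f(0^s), its end being too far from 0^s, so each arm leaves through a
   gate; two arms use the same gate, and since arms diverge in the tree this
   happens near 0^s: f(0^s) is within L1(2K+1) of a gate.  Consecutive spine
   vertices get the same gate, so f(0^Q) and f(0^(2Q)) are within 2L1(2K+1),
   whereas 0^Q and 0^(2Q) are at distance Q: a contradiction. *)

From Stdlib Require Import Reals List Arith Lia Psatz Classical Bool.
Import ListNotations.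

Open Scope nat_scope.

Section Walks.
Context {V : Type} {a : V -> V -> Prop}.

Lemma walk_app x y z k l : walk a x y k -> walk a y z l -> walk a x z (k + l).
Proof. induction 1; intros; simpl; auto. econstructor; eauto. Qed.

Lemma walk_one x y : a x y -> walk a x y 1.
Proof. intros; econstructor; eauto; constructor. Qed.

Lemma walk_nil_eq x y : walk a x y 0 -> x = y.
Proof. intros H; inversion H; auto. Qed.

Lemma walk_chain (h : nat -> V) N :
  (forall i, i < N -> a (h i) (h (S i))) -> forall i, i <= N -> walk a (h 0) (h i) i.
Proof.
  intros H i. induction i as [|i IH]; intros Hi; [constructor|].
  replace (S i) with (i + 1) at 2 by lia.
  apply walk_app with (h i); [apply IH; lia | apply walk_one, H; lia].
Qed.

Lemma dist_exists x y k : walk a x y k -> exists d, graph_dist a x y d /\ d <= k.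
Proof.
  induction k as [k IH] using lt_wf_ind. intros W.
  destruct (classic (exists k', k' < k /\ walk a x y k')) as [[k' [Hk W']]|Hmin].
  - destruct (IH k' Hk W') as [d [Hd Hdk]]. exists d; split; [exact Hd | lia].
  - exists k; split; [split; [exact W|] | lia].
    intros k' W'. destruct (le_lt_dec k k'); [assumption|].
    exfalso; apply Hmin; eauto.
Qed.

Hypothesis a_sym : forall x y, a x y -> a y x.

Lemma walk_rev {x y k} : walk a x y k -> walk a y x k.
Proof.
  induction 1; [constructor|].
  replace (S k) with (k + 1) by lia.
  apply walk_app with y; [assumption | apply walk_one, a_sym; assumption].
Qed.

End Walks.

(** Diamonds: vertices below [Nd i], edge list [edges i].  A vertex of
    D_(S m) is old if it is below [Nd m], and new otherwise. *)

Definition Nd (i : nat) : nat := fst (diamond_data i).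
Definition edges (i : nat) : list (nat * nat) := snd (diamond_data i).
Definition dadj (i x y : nat) : Prop := In (x, y) (edges i) \/ In (y, x) (edges i).

Lemma dadj_sym i x y : dadj i x y -> dadj i y x.
Proof. unfold dadj; tauto. Qed.

Lemma Nd_S i : Nd (S i) = Nd i + 2 * length (edges i).
Proof. unfold Nd, edges; simpl. destruct (diamond_data i); reflexivity. Qed.

Lemma edges_S i : edges (S i) = quad_edges (Nd i) 0 (edges i).
Proof. unfold Nd, edges; simpl. destruct (diamond_data i); reflexivity. Qed.

Lemma quad_edges_In es : forall N k x y, In (x, y) (quad_edges N k es) <->
  exists i u v, nth_error es i = Some (u, v) /\
   ((x = u /\ y = N + 2 * (k + i)) \/ (x = N + 2 * (k + i) /\ y = v) \/
    (x = v /\ y = N + 2 * (k + i) + 1) \/ (x = N + 2 * (k + i) + 1 /\ y = u)).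
Proof.
  induction es as [|[u v] es IH]; intros N k x y; simpl.
  - split; [tauto|]. intros [i [u [v [H _]]]]. destruct i; discriminate.
  - split.
    + intros [H|[H|[H|[H|H]]]];
        try (exists 0, u, v; split; [reflexivity|]; injection H as <- <-; lia).
      apply IH in H. destruct H as [i [u' [v' [Hi H]]]].
      exists (S i), u', v'; split; [exact Hi|].
      replace (k + S i) with (S k + i) by lia. exact H.
    + intros [[|i] [u' [v' [Hi H]]]]; simpl in Hi.
      * injection Hi as <- <-. rewrite Nat.add_0_r in H.
        destruct H as [[-> ->]|[[-> ->]|[[-> ->]|[-> ->]]]]; auto.
      * do 4 right. apply IH. exists i, u', v'; split; [exact Hi|].
        replace (S k + i) with (k + S i) by lia. exact H.
Qed.

Lemma edge_lt i x y : In (x, y) (edges i) -> x < Nd i /\ y < Nd i.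
Proof.
  revert x y; induction i as [|i IH]; intros x y H.
  - destruct H as [H|[]]. injection H as <- <-. cbv; lia.
  - rewrite edges_S, quad_edges_In in H. rewrite Nd_S.
    destruct H as [k [u [v [Hk H]]]].
    assert (k < length (edges i)) by (apply nth_error_Some; congruence).
    apply nth_error_In, IH in Hk. lia.
Qed.

Lemma dadj_lt m x y : dadj m x y -> x < Nd m /\ y < Nd m.
Proof. intros [H|H]; apply edge_lt in H; lia. Qed.

Lemma dadj_old_new m x y : dadj (S m) x y ->
  (x < Nd m /\ Nd m <= y) \/ (Nd m <= x /\ y < Nd m).
Proof.
  intros [H|H]; rewrite edges_S, quad_edges_In in H; destruct H as [k [u [v [Hk H]]]];
  apply nth_error_In, edge_lt in Hk; lia.
Qed.

Lemma creating_edge m a : Nd m <= a < Nd (S m) ->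
  exists u v, nth (Nat.div2 (a - Nd m)) (edges m) (0, 0) = (u, v) /\
    In (u, v) (edges m) /\ forall w, dadj (S m) a w <-> w = u \/ w = v.
Proof.
  intros Ha. rewrite Nd_S in Ha. set (i := Nat.div2 (a - Nd m)).
  pose proof (Nat.div2_odd (a - Nd m)) as Hd. fold i in Hd.
  set (b := Nat.odd (a - Nd m)) in Hd.
  assert (Hb : Nat.b2n b <= 1) by (destruct b; simpl; lia).
  assert (Hi : i < length (edges m)) by lia.
  destruct (nth i (edges m) (0, 0)) as [u v] eqn:E.
  assert (Hin : nth_error (edges m) i = Some (u, v))
    by (rewrite (nth_error_nth' _ (0, 0) Hi), E; reflexivity).
  exists u, v. split; [reflexivity|]. split; [eapply nth_error_In; eauto|].
  intros w. unfold dadj. rewrite edges_S, !quad_edges_In. split.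
  - intros [[k [u' [v' [Hk H]]]]|[k [u' [v' [Hk H]]]]];
      pose proof (edge_lt _ _ _ (nth_error_In _ _ Hk));
      assert (k = i) by lia; subst k; rewrite Hin in Hk; injection Hk as <- <-; lia.
  - destruct b; simpl in Hd; intros [-> | ->];
      [left | right | right | left]; exists i, u, v; split; auto; lia.
Qed.

Lemma edge_subdivided m u v : In (u, v) (edges m) ->
  exists a, In (u, a) (edges (S m)) /\ In (a, v) (edges (S m)).
Proof.
  intros H. apply In_nth_error in H. destruct H as [i Hi].
  exists (Nd m + 2 * i). rewrite edges_S, !quad_edges_In.
  split; exists i, u, v; split; auto; lia.
Qed.

Lemma walk_double m x y k : walk (dadj m) x y k -> walk (dadj (S m)) x y (2 * k).
Proof.
  induction 1 as [|x y z k Hxy W IH]; [constructor|].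
  replace (2 * S k) with (2 + 2 * k) by lia. apply walk_app with y; [|exact IH].
  destruct Hxy as [H|H]; destruct (edge_subdivided _ _ _ H) as [c [H1 H2]].
  - econstructor; [left; exact H1 | apply walk_one; left; exact H2].
  - econstructor; [right; exact H2 | apply walk_one; right; exact H1].
Qed.

Lemma Nd_mono m d : Nd m <= Nd (m + d).
Proof.
  induction d as [|d IH]; [rewrite Nat.add_0_r; lia|].
  rewrite Nat.add_succ_r, Nd_S. lia.
Qed.

Lemma walk_halve m : forall k x y, x < Nd m -> y < Nd m -> walk (dadj (S m)) x y k ->
  exists k', walk (dadj m) x y k' /\ 2 * k' <= k.
Proof.
  intro k. induction k as [k IH] using lt_wf_ind. intros x y Hx Hy W.
  inversion W as [|x0 z y0 k1 Hxz Wzy]; subst.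
  - exists 0; split; [constructor | lia].
  - destruct (dadj_old_new _ _ _ Hxz) as [[_ Hz]|[Hx' _]]; [|lia].
    inversion Wzy as [|z0 w y1 k2 Hzw Wwy]; subst; [lia|].
    destruct (dadj_old_new _ _ _ Hzw) as [[Hz' _]|[_ Hw]]; [lia|].
    pose proof (dadj_lt _ _ _ Hzw) as Hzl.
    destruct (creating_edge m z (conj Hz (proj1 Hzl))) as [u [v [_ [Huv Hnb]]]].
    destruct (IH k2 ltac:(lia) w y Hw Hy Wwy) as [k' [W' Hk']].
    assert (Hxuv : x = u \/ x = v) by (apply Hnb, dadj_sym, Hxz).
    assert (Hwuv : w = u \/ w = v) by (apply Hnb, Hzw).
    assert (Hxw : x = w \/ dadj m x w)
      by (destruct Hxuv as [-> | ->]; destruct Hwuv as [-> | ->]; unfold dadj; auto).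
    destruct Hxw as [<- | Hxw].
    + exists k'; split; [exact W' | lia].
    + exists (1 + k'); split; [apply walk_app with w; [apply walk_one|]; assumption | lia].
Qed.

Lemma gates_far j : forall d g g' k, g < Nd j -> g' < Nd j -> g <> g' ->
  walk (dadj (j + d)) g g' k -> 2 ^ d <= k.
Proof.
  induction d as [|d IH]; intros g g' k Hg Hg' Hne W.
  - destruct k; [apply walk_nil_eq in W; contradiction | simpl; lia].
  - rewrite Nat.add_succ_r in W. pose proof (Nd_mono j d).
    destruct (walk_halve (j + d) k g g' ltac:(lia) ltac:(lia) W) as [k' [W' Hk']].
    pose proof (IH g g' k' Hg Hg' Hne W'). rewrite Nat.pow_succ_r'. lia.
Qed.

Lemma walk_to_origin m : forall u, u < Nd m -> exists k, walk (dadj m) u 0 k /\ k < 2 ^ (m + 1).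
Proof.
  induction m as [|m IH]; intros u Hu.
  - destruct u as [|[|u]]; [exists 0 | exists 1 | cbv in Hu; lia]; split; cbn; try lia.
    + constructor.
    + apply walk_one. right. left. reflexivity.
  - rewrite Nat.add_succ_l, Nat.pow_succ_r'. destruct (le_lt_dec (Nd m) u) as [Hnew|Hold].
    + destruct (creating_edge m u (conj Hnew Hu)) as [x [y [_ [Hxy Hnb]]]].
      destruct (IH x (proj1 (edge_lt _ _ _ Hxy))) as [k [W Hk]].
      exists (1 + 2 * k). split; [|lia].
      apply walk_app with x; [apply walk_one, Hnb; auto | apply walk_double, W].
    + destruct (IH u Hold) as [k [W Hk]].
      exists (2 * k). split; [apply walk_double, W | lia].
Qed.

Lemma diamond_diameter m u v : u < Nd m -> v < Nd m ->
  exists k, walk (dadj m) u v k /\ k < 2 ^ (m + 2).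
Proof.
  intros Hu Hv.
  destruct (walk_to_origin m u Hu) as [k1 [W1 K1]], (walk_to_origin m v Hv) as [k2 [W2 K2]].
  exists (k1 + k2). split.
  - apply walk_app with 0; [exact W1 | apply (walk_rev (dadj_sym m)), W2].
  - replace (m + 2) with (S (m + 1)) by lia. rewrite Nat.pow_succ_r'. lia.
Qed.

(** View D_m (with m = j + d) as D_j whose edges are replaced by
    copies of D_d.  The vertices of D_j are the gates; a vertex u >= Nd j
    lies in the cell of an edge of D_j, recorded as the pair of gates [B u]. *)

Definition gate_of (B : nat -> nat * nat) (u g : nat) : Prop :=
  g = fst (B u) \/ g = snd (B u).

Record in_cell (j m d : nat) (B : nat -> nat * nat) (u : nat) : Prop := {
  gates_old : fst (B u) < Nd j /\ snd (B u) < Nd j;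
  gate1_close : exists k, walk (dadj m) u (fst (B u)) k /\ k < 2 ^ d;
  gate2_close : exists k, walk (dadj m) u (snd (B u)) k /\ k < 2 ^ d;
  new_nbr_same_cell : forall w, dadj m u w -> Nd j <= w -> B w = B u;
  old_nbr_is_gate : forall w, dadj m u w -> w < Nd j -> gate_of B u w }.

Definition cell_structure (j m d : nat) (B : nat -> nat * nat) : Prop :=
  forall u, Nd j <= u < Nd m -> in_cell j m d B u.

(* Passing from D_m to D_(S m): a new vertex inherits the cell of a
   creating endpoint that is not a gate, or else its creating edge is an
   edge of D_j and its two ends are the gates. *)
Definition refine_cells (j m : nat) (B : nat -> nat * nat) (a : nat) : nat * nat :=
  if a <? Nd m then B a else
  let (u, v) := nth (Nat.div2 (a - Nd m)) (edges m) (0, 0) in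
  if Nd j <=? u then B u else if Nd j <=? v then B v else (u, v).

Lemma refine_cells_old j m B a : a < Nd m -> refine_cells j m B a = B a.
Proof. intros Ha. unfold refine_cells. destruct (Nat.ltb_spec a (Nd m)); [reflexivity | lia]. Qed.

Lemma in_cell_through j m d B B' a x y :
  in_cell j m d B x -> x < Nd m -> y < Nd m -> dadj m x y -> dadj (S m) a x ->
  (forall w, dadj (S m) a w -> w = x \/ w = y) ->
  (forall w, w < Nd m -> B' w = B w) -> Nd j <= x -> B' a = B x ->
  in_cell j (S m) (S d) B' a.
Proof.
  intros [Hold [k1 [W1 K1]] [k2 [W2 K2]] Hnew Hgate] Hx Hy Hxy Hax Hnb HB' Hjx Ha.
  constructor; unfold gate_of; rewrite Ha; [exact Hold| | | |].
  - exists (1 + 2 * k1). rewrite Nat.pow_succ_r'. split; [|lia].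
    apply walk_app with x; [apply walk_one, Hax | apply walk_double, W1].
  - exists (1 + 2 * k2). rewrite Nat.pow_succ_r'. split; [|lia].
    apply walk_app with x; [apply walk_one, Hax | apply walk_double, W2].
  - intros w Haw Hjw. destruct (Hnb w Haw) as [-> | ->]; rewrite HB' by assumption;
      [reflexivity | apply Hnew; assumption].
  - intros w Haw Hjw. destruct (Hnb w Haw) as [-> | ->]; [lia | apply Hgate; assumption].
Qed.

Lemma in_cell_new j m d B : cell_structure j m d B -> Nd j <= Nd m ->
  forall a, Nd m <= a < Nd (S m) -> in_cell j (S m) (S d) (refine_cells j m B) a.
Proof.
  intros HB Hjm a Ha.
  destruct (creating_edge m a Ha) as [u [v [Hnth [Huv Hnb]]]].
  pose proof (edge_lt _ _ _ Huv) as [Hu Hv].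
  assert (Hrefine : refine_cells j m B a =
            if Nd j <=? u then B u else if Nd j <=? v then B v else (u, v)).
  { unfold refine_cells. destruct (Nat.ltb_spec a (Nd m)); [lia|]. rewrite Hnth. reflexivity. }
  assert (Hnb' : forall w, dadj (S m) a w -> w = u \/ w = v) by (intros w; apply Hnb).
  destruct (Nat.leb_spec (Nd j) u) as [Hju|Hju]; [|destruct (Nat.leb_spec (Nd j) v) as [Hjv|Hjv]].
  - exact (in_cell_through j m d B _ a u v (HB u ltac:(lia)) Hu Hv (or_introl Huv)
             (proj2 (Hnb u) (or_introl eq_refl)) Hnb' (refine_cells_old j m B) Hju Hrefine).
  - refine (in_cell_through j m d B _ a v u (HB v ltac:(lia)) Hv Hu (or_intror Huv)
              (proj2 (Hnb v) (or_intror eq_refl)) _ (refine_cells_old j m B) Hjv Hrefine).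
    intros w Hw. apply or_comm, Hnb', Hw.
  - assert (Hpow : 1 < 2 ^ S d) by (rewrite Nat.pow_succ_r'; pose proof (Nat.pow_nonzero 2 d); lia).
    constructor; unfold gate_of; rewrite Hrefine; simpl.
    + split; assumption.
    + exists 1; split; [apply walk_one, Hnb; auto | exact Hpow].
    + exists 1; split; [apply walk_one, Hnb; auto | exact Hpow].
    + intros w Haw Hjw. destruct (Hnb' w Haw); lia.
    + intros w Haw _. apply Hnb', Haw.
Qed.

Lemma in_cell_old j m d B : cell_structure j m d B -> Nd j <= Nd m ->
  forall a, Nd j <= a < Nd m -> in_cell j (S m) (S d) (refine_cells j m B) a.
Proof.
  intros HB Hjm a Ha.
  destruct (HB a Ha) as [Hold [k1 [W1 K1]] [k2 [W2 K2]] _ _].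
  constructor; unfold gate_of; rewrite refine_cells_old by lia; [exact Hold| | | |].
  - exists (2 * k1). rewrite Nat.pow_succ_r'. split; [apply walk_double, W1 | lia].
  - exists (2 * k2). rewrite Nat.pow_succ_r'. split; [apply walk_double, W2 | lia].
  - intros w Haw Hjw. pose proof (dadj_lt _ _ _ Haw).
    destruct (dadj_old_new _ _ _ Haw) as [[_ Hw]|[Hw _]]; [|lia].
    rewrite <- (refine_cells_old j m B a) by lia.
    symmetry. apply (in_cell_new j m d B HB Hjm w); [lia | apply dadj_sym, Haw | lia].
  - intros w Haw Hjw. destruct (dadj_old_new _ _ _ Haw); lia.
Qed.

Lemma cell_structure_exists j d : exists B, cell_structure j (j + d) d B.
Proof.
  induction d as [|d [B HB]].
  - exists (fun _ => (0, 0)). intros u Hu. rewrite Nat.add_0_r in Hu. lia.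
  - exists (refine_cells j (j + d) B). intros a Ha. rewrite Nat.add_succ_r in *.
    pose proof (Nd_mono j d).
    destruct (Nat.lt_ge_cases a (Nd (j + d))).
    + apply in_cell_old; auto; lia.
    + apply in_cell_new; auto; lia.
Qed.

Lemma leave_cell j m d B : cell_structure j m d B -> forall k u w,
  walk (dadj m) u w k -> Nd j <= u ->
  (Nd j <= w /\ B w = B u) \/
  exists g k', gate_of B u g /\ walk (dadj m) u g k' /\ k' <= k.
Proof.
  intros HB k u w W. induction W as [x|x z y k Hxz W IH]; intros Hx; [left; auto|].
  pose proof (dadj_lt _ _ _ Hxz) as [Hxm _].
  destruct (HB x (conj Hx Hxm)) as [_ _ _ Hnew Hgate].
  destruct (le_lt_dec (Nd j) z) as [Hz|Hz].
  - pose proof (Hnew z Hxz Hz) as Hzx.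
    destruct (IH Hz) as [[Hy Hyz]|[g [k' [Hg [Wg Hk]]]]]; [left; split; congruence|].
    right. exists g, (1 + k'). split; [unfold gate_of in *; rewrite <- Hzx; exact Hg|].
    split; [apply walk_app with z; [apply walk_one|]; assumption | lia].
  - right. exists z, 1. split; [apply Hgate; assumption|]. split; [apply walk_one, Hxz | lia].
Qed.

(** Binary trees.  Distances in T_n are bounded below by 1-Lipschitz
    functions: the length of a word, and the height above a fixed word. *)

Lemma tree_adj_sym n u v : tree_adj n u v -> tree_adj n v u.
Proof. intros [H1 [H2 [b [H|H]]]]; repeat split; auto; exists b; auto. Qed.

Lemma tree_adj_snoc n u b : length u < n -> tree_adj n u (u ++ [b]).
Proof. intros H. repeat split; rewrite ?length_app; simpl; try lia. exists b; auto. Qed.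

Definition tree_far (n : nat) (x y : list bool) (b : nat) : Prop :=
  forall k, walk (tree_adj n) x y k -> b <= k.

Lemma tree_lipschitz n (g : list bool -> nat) :
  (forall u b, g u <= g (u ++ [b]) + 1 /\ g (u ++ [b]) <= g u + 1) ->
  forall u v k, walk (tree_adj n) u v k -> g u <= g v + k /\ g v <= g u + k.
Proof.
  intros Hg u v k W. induction W as [|x y z k Hxy W IH]; [lia|].
  destruct Hxy as [_ [_ [b [E|E]]]]; [pose proof (Hg x b) | pose proof (Hg y b)]; subst; lia.
Qed.

Lemma length_lipschitz n u v k : walk (tree_adj n) u v k ->
  length u <= length v + k /\ length v <= length u + k.
Proof. apply tree_lipschitz. intros; rewrite length_app; simpl; lia. Qed.

Lemma walk_to_root n u : length u <= n -> walk (tree_adj n) u [] (length u).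
Proof.
  induction u as [|u b IH] using rev_ind; intros Hu; [constructor|].
  rewrite length_app in *. simpl in *. rewrite Nat.add_1_r.
  econstructor; [apply tree_adj_sym, tree_adj_snoc; lia | apply IH; lia].
Qed.

Lemma tree_connected n u v : length u <= n -> length v <= n ->
  exists k, walk (tree_adj n) u v k.
Proof.
  intros Hu Hv. exists (length u + length v).
  apply walk_app with []; [apply walk_to_root, Hu|].
  apply (walk_rev (tree_adj_sym n)), walk_to_root, Hv.
Qed.

Fixpoint is_prefix (l u : list bool) : bool :=
  match l, u with
  | [], _ => true
  | a :: l', b :: u' => Bool.eqb a b && is_prefix l' u'
  | _ :: _, [] => false
  end.

Lemma is_prefix_app l r : is_prefix l (l ++ r) = true.
Proof. induction l; simpl; auto. rewrite eqb_reflx; auto. Qed.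

Lemma is_prefix_length l u : is_prefix l u = true -> length l <= length u.
Proof.
  revert u; induction l; intros [|b u]; simpl; try discriminate; try lia.
  intros H. apply andb_true_iff in H as [_ H]. apply IHl in H. lia.
Qed.

Lemma is_prefix_snoc l u b : is_prefix l u = true -> is_prefix l (u ++ [b]) = true.
Proof.
  revert u; induction l; intros [|c u]; simpl; try discriminate; auto.
  intros H. apply andb_true_iff in H as [H1 H]. rewrite H1; simpl; auto.
Qed.

Lemma is_prefix_snoc_inv l u b : is_prefix l (u ++ [b]) = true ->
  is_prefix l u = true \/ l = u ++ [b].
Proof.
  revert u; induction l as [|a l IH]; intros [|c u]; simpl; auto; intros H;
    apply andb_true_iff in H as [H1 H]; apply eqb_prop in H1; subst.
  - destruct l; simpl in H; auto; discriminate.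
  - rewrite eqb_reflx; simpl. destruct (IH u H) as [H'|H']; auto. right; congruence.
Qed.

Lemma is_prefix_branch x b b' r : is_prefix (x ++ [b]) (x ++ b' :: r) = Bool.eqb b b'.
Proof. induction x; simpl; [apply andb_true_r | rewrite eqb_reflx; auto]. Qed.

Lemma is_prefix_short l u : length u < length l -> is_prefix l u = false.
Proof. intros H. destruct (is_prefix l u) eqn:E; auto. apply is_prefix_length in E; lia. Qed.

Definition height_above (l u : list bool) : nat :=
  if is_prefix l u then length u - length l + 1 else 0.

Lemma height_above_lipschitz n l u v k : walk (tree_adj n) u v k ->
  height_above l u <= height_above l v + k /\ height_above l v <= height_above l u + k.
Proof.
  apply tree_lipschitz. intros u' b. unfold height_above.
  destruct (is_prefix l u') eqn:E1.
  - rewrite (is_prefix_snoc _ _ _ E1). pose proof (is_prefix_length _ _ E1).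
    rewrite length_app; simpl; lia.
  - destruct (is_prefix l (u' ++ [b])) eqn:E2; [|lia].
    destruct (is_prefix_snoc_inv _ _ _ E2) as [H|H]; [congruence | subst; lia].
Qed.

Lemma height_above_app l r : height_above l (l ++ r) = length r + 1.
Proof. unfold height_above. rewrite is_prefix_app, length_app. lia. Qed.

Definition spine (s : nat) : list bool := repeat false s.

Inductive branch : Set := Down0 | Down1 | Up.

Definition arm (t : branch) (s i : nat) : list bool :=
  match t with
  | Down0 => spine (s + i)
  | Down1 => match i with 0 => spine s | S i' => spine s ++ true :: spine i' end
  | Up => spine (s - i)
  end.

Lemma spine_S s : spine (S s) = spine s ++ [false].
Proof. unfold spine. simpl. apply repeat_cons. Qed.

Lemma spine_length s : length (spine s) = s.
Proof. apply repeat_length. Qed.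

Lemma spine_split s i : spine (s + S i) = (spine s ++ [false]) ++ spine i.
Proof. unfold spine. rewrite repeat_app, <- app_assoc. reflexivity. Qed.

Lemma spine_adj n s : S s <= n -> tree_adj n (spine s) (spine (S s)).
Proof. intros H. rewrite spine_S. apply tree_adj_snoc. rewrite spine_length. lia. Qed.

Lemma spine_walk n s1 s2 : s1 <= s2 <= n ->
  walk (tree_adj n) (spine s1) (spine s2) (s2 - s1).
Proof.
  intros Hs.
  pose proof (walk_chain (a := tree_adj n) (fun i => spine (s1 + i)) (s2 - s1)) as C.
  simpl in C. rewrite Nat.add_0_r in C. replace s2 with (s1 + (s2 - s1)) at 1 by lia.
  apply C; [|lia]. intros i Hi. rewrite Nat.add_succ_r. apply spine_adj. lia.
Qed.

Lemma spine_far n s1 s2 : s1 <= s2 -> tree_far n (spine s1) (spine s2) (s2 - s1).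
Proof. intros Hab k W. apply length_lipschitz in W. rewrite !spine_length in W. lia. Qed.

Lemma arm_0 t s : arm t s 0 = spine s.
Proof. destruct t; simpl; f_equal; lia. Qed.

Lemma arm_length t s i :
  length (arm t s i) = match t with Up => s - i | _ => s + i end.
Proof.
  destruct t; [| destruct i |]; simpl;
    rewrite ?length_app, ?spine_length; simpl; rewrite ?spine_length; lia.
Qed.

Lemma arm_adj n t s Q i : Q <= s -> s + Q <= n -> i < Q ->
  tree_adj n (arm t s i) (arm t s (S i)).
Proof.
  intros HQs HQn Hi. destruct t; simpl.
  - rewrite Nat.add_succ_r. apply spine_adj. lia.
  - destruct i; simpl.
    + apply tree_adj_snoc. rewrite spine_length. lia.
    + rewrite spine_S, app_comm_cons, app_assoc. apply tree_adj_snoc.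
      rewrite length_app, spine_length. simpl. rewrite spine_length. lia.
  - replace (s - i) with (S (s - S i)) by lia. apply tree_adj_sym, spine_adj. lia.
Qed.

Lemma arm_walk n t s Q i : Q <= s -> s + Q <= n -> i <= Q ->
  walk (tree_adj n) (spine s) (arm t s i) i.
Proof.
  intros. rewrite <- (arm_0 t s).
  apply (walk_chain (fun i => arm t s i) Q); auto. intros; apply arm_adj with Q; auto.
Qed.

Lemma arm_end_far n t s Q : Q <= s -> tree_far n (spine s) (arm t s Q) Q.
Proof.
  intros HQ k W. apply length_lipschitz in W.
  rewrite spine_length, arm_length in W. destruct t; lia.
Qed.

Lemma down_arms_far n s i i' k : walk (tree_adj n) (arm Down0 s i) (arm Down1 s i') k ->
  i <= k /\ i' <= k.
Proof.
  intros W.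
  pose proof (height_above_lipschitz n (spine s ++ [false]) _ _ _ W) as H0.
  pose proof (height_above_lipschitz n (spine s ++ [true]) _ _ _ W) as H1.
  assert (E0 : height_above (spine s ++ [false]) (arm Down0 s i) = i /\
               height_above (spine s ++ [true]) (arm Down0 s i) = 0).
  { destruct i as [|i]; simpl arm.
    - unfold height_above. rewrite Nat.add_0_r, !is_prefix_short; auto;
        rewrite length_app, spine_length; simpl; lia.
    - rewrite spine_split, height_above_app, spine_length. split; [lia|].
      unfold height_above. rewrite <- app_assoc. simpl. rewrite is_prefix_branch. reflexivity. }
  assert (E1 : height_above (spine s ++ [false]) (arm Down1 s i') = 0 /\
               height_above (spine s ++ [true]) (arm Down1 s i') = i').
  { destruct i' as [|i']; simpl arm.
    - unfold height_above. rewrite !is_prefix_short; auto;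
        rewrite length_app, spine_length; simpl; lia.
    - unfold height_above at 1. rewrite is_prefix_branch. simpl.
      replace (spine s ++ true :: spine i') with ((spine s ++ [true]) ++ spine i')
        by (rewrite <- app_assoc; reflexivity).
      rewrite height_above_app, spine_length. split; [reflexivity | lia]. }
  lia.
Qed.

Lemma arms_diverge n s t t' i i' : t <> t' -> i <= s -> i' <= s ->
  tree_far n (arm t s i) (arm t' s i') i.
Proof.
  intros Htt' Hi Hi' k W.
  pose proof (length_lipschitz _ _ _ _ W) as HL.
  rewrite !arm_length in HL.
  destruct t, t'; try congruence; try lia.
  - apply (down_arms_far n s i i' k W).
  - apply (down_arms_far n s i' i k), (walk_rev (tree_adj_sym n)), W.
Qed.

Lemma two_arms_agree (P : branch -> nat -> Prop) (g1 g2 : nat) :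
  (forall t, exists g, (g = g1 \/ g = g2) /\ P t g) ->
  exists t t' g, t <> t' /\ (g = g1 \/ g = g2) /\ P t g /\ P t' g.
Proof.
  intros H. destruct (H Down0) as [a [Ha Pa]], (H Down1) as [b [Hb Pb]], (H Up) as [c [Hc Pc]].
  destruct Ha as [-> | ->], Hb as [-> | ->], Hc as [-> | ->];
    [ exists Down0, Down1, g1 | exists Down0, Down1, g1 | exists Down0, Up, g1
    | exists Down1, Up, g2 | exists Down1, Up, g1 | exists Down0, Up, g2
    | exists Down0, Down1, g2 | exists Down0, Down1, g2 ];
    repeat split; auto; discriminate.
Qed.

Open Scope R_scope.

Definition near {V : Type} (a : V -> V -> Prop) (x y : V) (r : R) : Prop :=
  exists k, walk a x y k /\ INR k <= r.

Section Near.
Context {V : Type} {a : V -> V -> Prop}.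

Lemma near_of_walk {x y k} : walk a x y k -> near a x y (INR k).
Proof. intros W. exists k. split; [exact W | apply Rle_refl]. Qed.

Lemma near_refl x r : 0 <= r -> near a x x r.
Proof. intros Hr. exists 0%nat. split; [constructor | simpl; lra]. Qed.

Lemma near_trans {x y z r1 r2} : near a x y r1 -> near a y z r2 -> near a x z (r1 + r2).
Proof.
  intros [k1 [W1 K1]] [k2 [W2 K2]]. exists (k1 + k2)%nat.
  split; [apply walk_app with y; assumption | rewrite plus_INR; lra].
Qed.

Lemma near_weaken {x y} r {r'} : r <= r' -> near a x y r -> near a x y r'.
Proof. intros Hr [k [W K]]. exists k. split; [exact W | lra]. Qed.

Hypothesis a_sym : forall x y, a x y -> a y x.

Lemma near_sym {x y r} : near a x y r -> near a y x r.
Proof. intros [k [W K]]. exists k. split; [exact (walk_rev a_sym W) | exact K]. Qed.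

End Near.

Lemma INR_pow2 d : INR (2 ^ d) = 2 ^ d.
Proof. rewrite pow_INR. reflexivity. Qed.

Lemma scale_exists (z : R) : 1 <= z -> exists M : nat, z < 2 ^ M /\ 2 ^ M <= 2 * z.
Proof.
  intros Hz. destruct (INR_unbounded z) as [N HN].
  assert (HN2 : z < 2 ^ N).
  { apply Rlt_le_trans with (INR N); [lra|]. clear HN.
    induction N as [|N IH]; [simpl; lra|].
    rewrite S_INR. simpl. pose proof (pow_R1_Rle 2 N ltac:(lra)). lra. }
  clear HN. induction N as [|N IH]; [simpl in HN2; lra|].
  destruct (Rlt_le_dec z (2 ^ N)) as [H|H]; [exact (IH H)|].
  exists (S N). simpl in *. lra.
Qed.

Definition bilip_with (n m : nat) (f : list bool -> nat) (L1 L2 : R) : Prop :=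
  (forall x, (length x <= n)%nat -> (f x < Nd m)%nat) /\
  (forall x y d1 d2, (length x <= n)%nat -> (length y <= n)%nat ->
     graph_dist (tree_adj n) x y d1 -> graph_dist (dadj m) (f x) (f y) d2 ->
     INR d2 <= L1 * INR d1 /\ INR d1 <= L2 * INR d2).

Lemma bilip_with_of_dist_le n m f K :
  bilip_dist_le (tree n) (diamond m) f K ->
  exists L1 L2, 0 < L1 /\ 0 < L2 /\ L1 * L2 <= K /\ bilip_with n m f L1 L2.
Proof.
  intros [Hv [L1 [L2 [H1 [H2 [H3 Hl]]]]]].
  exists L1, L2. split; [exact H1|]. split; [exact H2|]. split; [exact H3|].
  split; [exact Hv | exact Hl].
Qed.

Section Embedding.
Variables (n m : nat) (f : list bool -> nat) (L1 L2 K : R) (Q : nat).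
Hypothesis Hf : bilip_with n m f L1 L2.
Hypotheses (HL1 : 0 < L1) (HL2 : 0 < L2) (HK : L1 * L2 <= K).
Hypotheses (HQn : (3 * Q <= n)%nat) (HQ : 4 * K * (4 * K + 3) < INR Q).

Lemma image_near {x y k} : (length x <= n)%nat -> (length y <= n)%nat ->
  walk (tree_adj n) x y k -> near (dadj m) (f x) (f y) (L1 * INR k).
Proof.
  intros Hx Hy W. destruct Hf as [Hv Hlip].
  destruct (dist_exists x y k W) as [d1 [D1 Hd1]].
  destruct (diamond_diameter m (f x) (f y) (Hv x Hx) (Hv y Hy)) as [k0 [W0 _]].
  destruct (dist_exists _ _ _ W0) as [d2 [D2 _]].
  destruct (Hlip x y d1 d2 Hx Hy D1 D2) as [H1 _].
  exists d2. split; [apply D2|]. apply le_INR in Hd1. nra.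
Qed.

Lemma tree_far_image {x y b r} : (length x <= n)%nat -> (length y <= n)%nat ->
  tree_far n x y b -> near (dadj m) (f x) (f y) r -> INR b <= L2 * r.
Proof.
  intros Hx Hy Hfar [k [W Hk]]. destruct Hf as [_ Hlip].
  destruct (tree_connected n x y Hx Hy) as [k1 W1].
  destruct (dist_exists _ _ _ W1) as [d1 [D1 _]].
  destruct (dist_exists _ _ _ W) as [d2 [D2 Hd2]].
  destruct (Hlip x y d1 d2 Hx Hy D1 D2) as [_ H2].
  assert (INR b <= INR d1) by (apply le_INR, Hfar, D1).
  apply le_INR in Hd2. nra.
Qed.

Lemma K_pos : 0 < K.
Proof. nra. Qed.

Lemma Q_pos : (1 <= Q)%nat.
Proof. pose proof K_pos. destruct Q; [exfalso; simpl in HQ; nra | lia]. Qed.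

Lemma spine_vertex s : (s <= n)%nat -> (length (spine s) <= n)%nat.
Proof. rewrite spine_length. lia. Qed.

Lemma arm_vertex t s i : (s <= 2 * Q)%nat -> (i <= Q)%nat -> (length (arm t s i) <= n)%nat.
Proof. intros. rewrite arm_length. destruct t; lia. Qed.

(* f does not contract the first edge of the spine, so L1 >= 1. *)
Lemma L1_ge_1 : 1 <= L1.
Proof.
  pose proof Q_pos.
  assert (Hv0 := spine_vertex 0 ltac:(lia)). assert (Hv1 := spine_vertex 1 ltac:(lia)).
  destruct (image_near Hv0 Hv1 (spine_walk n 0 1 ltac:(lia))) as [k [W Hk]].
  pose proof (tree_far_image Hv0 Hv1 (spine_far n 0 1 ltac:(lia)) (near_of_walk W)) as Hfar.
  destruct k as [|k]; simpl in Hfar; [lra|].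
  rewrite S_INR in Hk. pose proof (pos_INR k). simpl in Hk. lra.
Qed.

(* The spine has length n >= 3Q while D_m has diameter below 2^(m+2), so
   D_m is at least as deep as the scale M. *)
Lemma diamond_deep M : 2 ^ M <= 2 * (L1 * (4 * K + 3)) -> (M <= m)%nat.
Proof.
  intros HM. destruct (le_lt_dec M m) as [|Hlt]; [assumption | exfalso].
  pose proof Hf as [Hv _]. pose proof K_pos.
  assert (Hv0 := spine_vertex 0 ltac:(lia)). assert (Hvn := spine_vertex n ltac:(lia)).
  destruct (diamond_diameter m _ _ (Hv _ Hv0) (Hv _ Hvn)) as [k [W Hk]].
  pose proof (tree_far_image Hv0 Hvn (spine_far n 0 n ltac:(lia)) (near_of_walk W)) as Hfar.
  rewrite Nat.sub_0_r in Hfar.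
  assert (Hk' : (k <= 2 * 2 ^ M)%nat).
  { rewrite <- Nat.pow_succ_r'.
    pose proof (Nat.pow_le_mono_r 2 (m + 2) (S M) ltac:(lia) ltac:(lia)). lia. }
  apply le_INR in Hk'. rewrite mult_INR, INR_pow2 in Hk'. simpl in Hk'.
  apply le_INR in HQn. rewrite mult_INR in HQn. simpl in HQn.
  assert (L2 * INR k <= L2 * (2 * 2 ^ M)) by (apply Rmult_le_compat_l; lra).
  nra.
Qed.

Section Cells.
Variables (j M : nat) (B : nat -> nat * nat).
Hypotheses (Hm : m = (j + M)%nat) (HB : cell_structure j m M B).
Hypotheses (HM_lo : L1 * (4 * K + 3) < 2 ^ M) (HM_hi : 2 ^ M <= 2 * (L1 * (4 * K + 3))).

Lemma gate_old v g : (Nd j <= v < Nd m)%nat -> gate_of B v g -> (g < Nd j)%nat.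
Proof. intros Hv [-> | ->]; apply (gates_old _ _ _ _ _ (HB v Hv)). Qed.

(* Follow an arm from 0^s: while its image stays in the cell of f(0^s),
   each step moves by at most L1, so if it ever leaves, it does so through
   a gate within L1 of a point of the arm. *)
Lemma arm_stays_or_exits s t : (Q <= s <= 2 * Q)%nat -> (Nd j <= f (spine s))%nat ->
  forall i, (i <= Q)%nat ->
  ((Nd j <= f (arm t s i))%nat /\ B (f (arm t s i)) = B (f (spine s))) \/
  exists i' g, (i' <= Q)%nat /\ gate_of B (f (spine s)) g /\
               near (dadj m) (f (arm t s i')) g L1.
Proof.
  intros Hs Hv. induction i as [|i IH]; intros Hi.
  - left. rewrite arm_0. auto.
  - destruct (IH ltac:(lia)) as [[Hnew Hcell]|Hexit]; [|right; exact Hexit].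
    destruct (image_near (arm_vertex t s i ltac:(lia) ltac:(lia))
                (arm_vertex t s (S i) ltac:(lia) Hi) (walk_one _ _ (arm_adj n t s Q i ltac:(lia) ltac:(lia) ltac:(lia)))) as [k [W Hk]].
    destruct (leave_cell _ _ _ _ HB _ _ _ W Hnew) as [[Hnew' Hcell']|[g [k' [Hg [W' Hk']]]]].
    + left. split; [assumption | congruence].
    + right. exists i, g. split; [lia|].
      split; [unfold gate_of in *; rewrite <- Hcell; exact Hg|].
      exists k'. split; [exact W'|]. apply le_INR in Hk'. simpl in Hk. lra.
Qed.

(* The end of an arm is at distance Q from 0^s, too far to stay in the
   cell of f(0^s), whose points are within 2^(M+1) of each other. *)
Lemma arm_exits s t : (Q <= s <= 2 * Q)%nat -> (Nd j <= f (spine s))%nat ->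
  exists i g, (i <= Q)%nat /\ gate_of B (f (spine s)) g /\
              near (dadj m) (f (arm t s i)) g L1.
Proof.
  intros Hs Hv.
  destruct (arm_stays_or_exits s t Hs Hv Q (le_n _)) as [[Hnew Hcell]|Hexit];
    [exfalso | exact Hexit].
  pose proof Hf as [Hvert _]. pose proof K_pos.
  assert (Hvs := spine_vertex s ltac:(lia)). assert (Hva := arm_vertex t s Q ltac:(lia) (le_n _)).
  destruct (HB _ (conj Hv (Hvert _ Hvs))) as [_ [k1 [W1 K1]] _ _ _].
  destruct (HB _ (conj Hnew (Hvert _ Hva))) as [_ [k2 [W2 K2]] _ _ _].
  rewrite Hcell in W2.
  assert (Hnear : near (dadj m) (f (spine s)) (f (arm t s Q)) (INR (k1 + k2))).
  { apply near_of_walk, walk_app with (fst (B (f (spine s)))); [exact W1|].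
    exact (walk_rev (dadj_sym m) W2). }
  pose proof (tree_far_image Hvs Hva (arm_end_far n t s Q ltac:(lia)) Hnear) as Hfar.
  assert (Hk : (k1 + k2 <= 2 * 2 ^ M)%nat) by lia.
  apply le_INR in Hk. rewrite mult_INR, INR_pow2 in Hk. simpl in Hk.
  assert (L2 * INR (k1 + k2) <= L2 * (2 * 2 ^ M)) by (apply Rmult_le_compat_l; lra).
  nra.
Qed.

(* Two different arms reaching the same gate do so close to 0^s, since the
   arms diverge in the tree; hence 0^s is close to that gate. *)
Lemma shared_exit_close s t t' i i' g : t <> t' -> (Q <= s <= 2 * Q)%nat ->
  (i <= Q)%nat -> (i' <= Q)%nat ->
  near (dadj m) (f (arm t s i)) g L1 -> near (dadj m) (f (arm t' s i')) g L1 ->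
  near (dadj m) (f (spine s)) g (L1 * (2 * K + 1)).
Proof.
  intros Htt' Hs Hi Hi' Ng Ng'. pose proof K_pos.
  assert (Hva := arm_vertex t s i ltac:(lia) Hi).
  assert (Hva' := arm_vertex t' s i' ltac:(lia) Hi').
  pose proof (tree_far_image Hva Hva' (arms_diverge n s t t' i i' Htt' ltac:(lia) ltac:(lia))
                (near_trans Ng (near_sym (dadj_sym m) Ng'))) as Hfar.
  pose proof (image_near (spine_vertex s ltac:(lia)) Hva
                (arm_walk n t s Q i ltac:(lia) ltac:(lia) Hi)) as Hnear.
  apply (near_weaken (L1 * INR i + L1)); [nra|].
  exact (near_trans Hnear Ng).
Qed.

Lemma spine_near_gate s : (Q <= s <= 2 * Q)%nat ->
  exists g, (g < Nd j)%nat /\ near (dadj m) (f (spine s)) g (L1 * (2 * K + 1)).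
Proof.
  intros Hs. pose proof K_pos. pose proof Hf as [Hvert _].
  set (v := f (spine s)).
  assert (Hvm : (v < Nd m)%nat) by (apply Hvert, spine_vertex; lia).
  destruct (lt_dec v (Nd j)) as [Hold|Hnew].
  { exists v. split; [exact Hold | apply near_refl; nra]. }
  assert (Hv : (Nd j <= v < Nd m)%nat) by lia.
  destruct (two_arms_agree
              (fun t g => exists i, (i <= Q)%nat /\ near (dadj m) (f (arm t s i)) g L1)
              (fst (B v)) (snd (B v))) as [t [t' [g [Htt' [Hg [[i [Hi Ng]] [i' [Hi' Ng']]]]]]]].
  - intros t. destruct (arm_exits s t Hs ltac:(lia)) as [i [g [Hi [Hg Ng]]]].
    exists g. split; [exact Hg|]. exists i. split; assumption.
  - exists g. split; [exact (gate_old v g Hv Hg)|].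
    exact (shared_exit_close s t t' i i' g Htt' Hs Hi Hi' Ng Ng').
Qed.

(* Consecutive spine vertices get the same gate, since distinct gates are
   2^M > L1 (4K+3) apart; so 0^Q and 0^(2Q) share a gate. *)
Lemma spine_common_gate : exists g,
  near (dadj m) (f (spine Q)) g (L1 * (2 * K + 1)) /\
  near (dadj m) (f (spine (2 * Q))) g (L1 * (2 * K + 1)).
Proof.
  assert (Hgate : forall t, (t <= Q)%nat -> exists g, (g < Nd j)%nat /\
            near (dadj m) (f (spine Q)) g (L1 * (2 * K + 1)) /\
            near (dadj m) (f (spine (Q + t))) g (L1 * (2 * K + 1))).
  { induction t as [|t IH]; intros Ht.
    - rewrite Nat.add_0_r. destruct (spine_near_gate Q ltac:(lia)) as [g [Hg Ng]].
      exists g. auto.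
    - destruct (IH ltac:(lia)) as [g [Hg [N1 N2]]].
      destruct (spine_near_gate (Q + S t) ltac:(lia)) as [g' [Hg' N3]].
      exists g'. split; [exact Hg'|]. split; [|exact N3].
      destruct (Nat.eq_dec g g') as [<- | Hne]; [exact N1 | exfalso].
      pose proof (image_near (spine_vertex (Q + t) ltac:(lia))
                    (spine_vertex (S (Q + t)) ltac:(lia))
                    (walk_one _ _ (spine_adj n (Q + t) ltac:(lia)))) as Hstep.
      rewrite <- Nat.add_succ_r in Hstep.
      destruct (near_trans (near_trans (near_sym (dadj_sym m) N2) Hstep) N3) as [k [W Hk]].
      rewrite Hm in W. pose proof (gates_far j M g g' k Hg Hg' Hne W) as Hfar.
      apply le_INR in Hfar. rewrite INR_pow2 in Hfar. simpl in Hk. lra. }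
  destruct (Hgate Q (le_n _)) as [g [_ [N1 N2]]].
  exists g. replace (2 * Q)%nat with (Q + Q)%nat by lia. auto.
Qed.

(* So f(0^Q) and f(0^(2Q)) are within 2 L1 (2K+1), though 0^Q and 0^(2Q)
   are at distance Q in the tree. *)
Lemma cells_contradiction : False.
Proof.
  pose proof K_pos. destruct spine_common_gate as [g [N1 N2]].
  pose proof (tree_far_image (spine_vertex Q ltac:(lia)) (spine_vertex (2 * Q) ltac:(lia))
                (spine_far n Q (2 * Q) ltac:(lia)) (near_trans N1 (near_sym (dadj_sym m) N2)))
    as Hfar.
  replace (2 * Q - Q)%nat with Q in Hfar by lia.
  nra.
Qed.

End Cells.

Lemma no_embedding : False.
Proof.
  pose proof K_pos. pose proof L1_ge_1.
  destruct (scale_exists (L1 * (4 * K + 3)) ltac:(nra)) as [M [HM_lo HM_hi]].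
  destruct (Nat.le_exists_sub M m (diamond_deep M HM_hi)) as [j [Hm _]].
  destruct (cell_structure_exists j M) as [B HB]. rewrite <- Hm in HB.
  exact (cells_contradiction j M B Hm HB HM_lo HM_hi).
Qed.

End Embedding.

Theorem theoremT :
  ~ (exists (K : R) (m : nat -> nat) (f : forall n : nat, list bool -> nat),
       forall n : nat, (1 <= n)%nat ->
         bilip_dist_le (tree n) (diamond (m n)) (f n) K).
Proof.
  intros [K [m [f Hf]]].
  destruct (INR_unbounded (4 * K * (4 * K + 3))) as [Q HQ].
  assert (HQ' : 4 * K * (4 * K + 3) < INR (S Q)) by (rewrite S_INR; lra).
  destruct (bilip_with_of_dist_le _ _ _ _ (Hf (3 * S Q)%nat ltac:(lia)))
    as [L1 [L2 [HL1 [HL2 [HK Hbilip]]]]].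
  exact (no_embedding _ _ _ L1 L2 K (S Q) Hbilip HL1 HL2 HK (le_n _) HQ').
Qed.
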